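(* Let $k\ge 3$. For $i=1,2$ let $m_i\ge 2$ and $r_i\ge 1$ be integers and suppose $\mathcal{C}_i$ is a coloring of $\mathbb{Z}_{m_i}\setminus\{0\}$ with $r_i$ colors such that, for every choice of one of the $r_i$ colors for $0$, the resulting coloring of $\mathbb{Z}_{m_i}$ contains no nontrivial monochromatic $k$-AP. Then there is a coloring of $\mathbb{Z}_{m_1m_2}\setminus\{0\}$ with $r_1r_2$ colors such that, for every choice of one of the $r_1r_2$ colors for $0$, the resulting coloring of $\mathbb{Z}_{m_1m_2}$ contains no nontrivial monochromatic $k$-AP.
   Context: A $k$-AP in $\mathbb{Z}_m$ is a sequence $a,a+d,\ldots,a+(k-1)d$ with $a,d\in\mathbb{Z}_m$; it is trivial if $d\equiv 0\pmod m$ (equivalently all terms are equal) and nontrivial otherwise. A progression is monochromatic if all its terms receive the same color. *)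

From HB Require Import structures.
From mathcomp Require Import all_boot all_order all_algebra.
Set Implicit Arguments. Unset Strict Implicit. Unset Printing Implicit Defensive.
Import GRing.Theory.
Local Open Scope ring_scope.

(* A coloring of Z_m \ {0} with r colors is represented by c : 'Z_m -> 'I_r
   whose value at 0 is irrelevant.  [ext_col c x0] colors 0 with x0 and
   every nonzero x with c x. *)
Definition ext_col (m r : nat) (c : 'Z_m -> 'I_r) (x0 : 'I_r) : 'Z_m -> 'I_r :=
  fun x => if x == 0 then x0 else c x.

Definition has_mono_kAP (m : nat) (T : Type) (k : nat) (col : 'Z_m -> T) : Prop :=
  exists a d : 'Z_m, d != 0 /\ (forall j : nat, (j < k)%N -> col (a + j%:R * d) = col a).

From HB Require Import structures.
From mathcomp Require Import all_boot all_order all_algebra.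
From mathcomp Require Import zify.
Set Implicit Arguments.
Unset Strict Implicit.
Unset Printing Implicit Defensive.
Import GRing.Theory.
Local Open Scope ring_scope.

(* Write x in Z_(m1*m2) as x = x_low + m1 * x_high with x_low in Z_m1 and
   x_high in Z_m2, and color x by the pair (c1 x_low, c2 x_high), encoded as
   one of r1 * r2 colors.  Suppose a, a + d, ..., a + (k-1)d is a nontrivial
   monochromatic progression for some color of 0.
   - If m1 does not divide d, the low digits form a nontrivial k-AP of Z_m1;
   - if m1 divides d, the low digits are constant and the high digits form
     a nontrivial k-AP of Z_m2 (with difference d / m1).
   In both cases the projected progression is monochromatic for c1 (resp.
   c2), once 0 receives the matching component of the common color. *)

Lemma card_pair_ord (r1 r2 : nat) : #|{: 'I_r1 * 'I_r2}| = (r1 * r2)%N.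
Proof. by rewrite card_prod !card_ord. Qed.

Definition pair_code (r1 r2 : nat) (p : 'I_r1 * 'I_r2) : 'I_(r1 * r2) :=
  cast_ord (card_pair_ord r1 r2) (enum_rank p).

Definition pair_decode (r1 r2 : nat) (z : 'I_(r1 * r2)) : 'I_r1 * 'I_r2 :=
  enum_val (cast_ord (esym (card_pair_ord r1 r2)) z).

Arguments pair_decode {r1 r2}.

Lemma pair_codeK (r1 r2 : nat) : cancel (@pair_code r1 r2) pair_decode.
Proof. by move=> p; rewrite /pair_decode /pair_code cast_ordK enum_rankK. Qed.

Lemma mono_kAP_transfer (k n m s r : nat) (phi : 'Z_n -> 'Z_m)
    (proj : 'I_s -> 'I_r) (c : 'Z_n -> 'I_s) (c' : 'Z_m -> 'I_r)
    (x0 : 'I_s) (a d : 'Z_n) :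
  phi 0 = 0 ->
  (forall x, x != 0 -> proj (c x) = c' (phi x)) ->
  (forall j, (j < k)%N -> phi (a + j%:R * d) = phi a + j%:R * phi d) ->
  phi d != 0 ->
  (forall j, (j < k)%N -> ext_col c x0 (a + j%:R * d) = ext_col c x0 a) ->
  has_mono_kAP k (ext_col c' (proj (ext_col c x0 a))).
Proof.
move=> phi0 compat phiAP phid_nz mono.
set C := ext_col c x0 a.
have push y : ext_col c x0 y = C -> ext_col c' (proj C) (phi y) = proj C.
  move=> Cy; rewrite /ext_col; have [//|phiy_nz] := eqVneq (phi y) 0.
  have y_nz : y != 0 by apply: contra_neq phiy_nz => ->.
  by rewrite -Cy /ext_col (negbTE y_nz) compat.
exists (phi a), (phi d); split=> // j jk.
by rewrite -phiAP // !push // mono.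
Qed.

Lemma val_Zp_AP (p : nat) (a d : 'Z_p) (j : nat) : (1 < p)%N ->
  val (a + j%:R * d) = ((val a + j * val d) %% p)%N.
Proof.
move=> p_gt1; rewrite -(val_Zp_nat p_gt1); congr val.
by rewrite natrD natrM !natr_Zp.
Qed.

Section Digits.

Variables m1 m2 : nat.
Hypotheses (m1_gt1 : (1 < m1)%N) (m2_gt1 : (1 < m2)%N).

Let m_gt1 : (1 < m1 * m2)%N. Proof. nia. Qed.
Let m1_gt0 : (0 < m1)%N. Proof. nia. Qed.

Definition low_digit (x : 'Z_(m1 * m2)) : 'Z_m1 := (val x)%:R.
Definition high_digit (x : 'Z_(m1 * m2)) : 'Z_m2 := (val x %/ m1)%:R.

Lemma low_digit0 : low_digit 0 = 0.
Proof. by []. Qed.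

Lemma high_digit0 : high_digit 0 = 0.
Proof. by rewrite /high_digit div0n. Qed.

Lemma low_digit_eq0 (x : 'Z_(m1 * m2)) : (low_digit x == 0) = (m1 %| val x)%N.
Proof.
by rewrite /dvdn -val_eqE /= /low_digit (val_Zp_nat m1_gt1).
Qed.

Lemma high_digit_neq0 (x : 'Z_(m1 * m2)) :
  x != 0 -> (m1 %| val x)%N -> high_digit x != 0.
Proof.
move=> x_nz /dvdnP[q xq]; rewrite -val_eqE /= /high_digit (val_Zp_nat m2_gt1).
have x_lt : (val x < m1 * m2)%N.
  by have := ltn_ord x; rewrite [X in (_ < X)%N -> _]Zp_cast.
have vx_nz : val x != 0%N by rewrite -val_eqE in x_nz.
move: x_lt vx_nz; rewrite xq mulnK // => ? ?; rewrite modn_small; nia.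
Qed.

Lemma low_digit_AP (a d : 'Z_(m1 * m2)) (j : nat) :
  low_digit (a + j%:R * d) = low_digit a + j%:R * low_digit d.
Proof.
rewrite /low_digit -natrM -natrD (val_Zp_AP _ _ _ m_gt1); apply: val_inj.
by rewrite /= !(val_Zp_nat m1_gt1) modn_dvdm // dvdn_mulr.
Qed.

Lemma high_digit_AP (a d : 'Z_(m1 * m2)) (j : nat) : (m1 %| val d)%N ->
  high_digit (a + j%:R * d) = high_digit a + j%:R * high_digit d.
Proof.
move=> /dvdnP[q dq]; rewrite /high_digit -natrM -natrD (val_Zp_AP _ _ _ m_gt1).
have div_mod X : (X %% (m1 * m2) %/ m1 %% m2 = X %/ m1 %% m2)%N.
  by rewrite mulnC -modn_divl modn_mod.
apply: val_inj; rewrite /= !(val_Zp_nat m2_gt1) div_mod.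
by rewrite dq mulnK // mulnA divnDMl.
Qed.

End Digits.

Theorem mainTheorem4 (k m1 m2 r1 r2 : nat)
  (hk : (3 <= k)%N) (hm1 : (2 <= m1)%N) (hm2 : (2 <= m2)%N)
  (hr1 : (1 <= r1)%N) (hr2 : (1 <= r2)%N)
  (c1 : 'Z_m1 -> 'I_r1) (c2 : 'Z_m2 -> 'I_r2)
  (h1 : forall x0 : 'I_r1, ~ has_mono_kAP k (ext_col c1 x0))
  (h2 : forall x0 : 'I_r2, ~ has_mono_kAP k (ext_col c2 x0)) :
  exists c : 'Z_(m1 * m2) -> 'I_(r1 * r2),
    forall x0 : 'I_(r1 * r2), ~ has_mono_kAP k (ext_col c x0).
Proof.
pose c (x : 'Z_(m1 * m2)) := pair_code (c1 (low_digit x), c2 (high_digit x)).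
exists c => x0 [a [d [d_nz mono]]].
have compat1 x : x != 0 -> (pair_decode (c x)).1 = c1 (low_digit x).
  by rewrite pair_codeK.
have compat2 x : x != 0 -> (pair_decode (c x)).2 = c2 (high_digit x).
  by rewrite pair_codeK.
have [m1_dvd_d | m1_ndvd_d] := boolP (m1 %| val d)%N.
- apply: (h2 (pair_decode (ext_col c x0 a)).2).
  apply: (mono_kAP_transfer (proj := fun z => (pair_decode z).2) _ compat2
           _ _ mono).
  + exact: high_digit0.
  + by move=> j _; apply: high_digit_AP.
  + exact: high_digit_neq0.
- apply: (h1 (pair_decode (ext_col c x0 a)).1).
  apply: (mono_kAP_transfer (proj := fun z => (pair_decode z).1) _ compat1
           _ _ mono).
  + exact: low_digit0.
  + by move=> j _; apply: low_digit_AP.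
  + by rewrite low_digit_eq0.
Qed.
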